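(* Let $n$ be a positive integer, $g=3n+2$, and let $G=\{\ell_1<\dots<\ell_g\}$ be a pseudo-symmetric pure $(2n+1)$-sparse gapset of genus $g$ with multiplicity $m$. Then $G$ has depth $3$, its canonical partition is $G=G_0\cup G_1\cup G_2$ with $G_2=\{\ell_g\}$ and $\#G_1=n+1$, and moreover $\ell_{g-1}=2m-1$, $\ell_g=3m-1$, and $\alpha=g-1$, where $\alpha=\max\{i:\ell_{i+1}-\ell_i=2n+1\}$.
   Context: A gapset is a finite set $G\subset\mathbb{N}=\{1,2,\dots\}$ such that whenever $z\in G$ and $z=x+y$ with $x,y\in\mathbb{N}$, then $x\in G$ or $y\in G$; its genus is $g=\#G$. Multiplicity $m(G)=\min\{s\in\mathbb{N}:s\notin G\}$; conductor $c(G)=\min\{s\in\mathbb{N}: s+t\notin G\ \forall t\in\mathbb{N}_0\}$; Frobenius number $F(G)=c(G)-1=\ell_g$; depth $q=\lceil c(G)/m(G)\rceil$. The canonical partition is $G=G_0\cup\dots\cup G_{q-1}$ with $G_i=G\cap[im+1,(i+1)m-1]$ (so $G_0=[1,m-1]$). $G$ is pseudo-symmetric if $F(G)=2g-2$. $G$ is pure $\kappa$-sparse if $\ell_{i+1}-\ell_i\le\kappa$ for all $i$ with equality for some $i$. *)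

From mathcomp Require Import all_boot.
Set Implicit Arguments. Unset Strict Implicit. Unset Printing Implicit Defensive.

Definition is_gapset (G : seq nat) : bool :=
  [&& uniq G, all (fun z => 0 < z) G &
      all (fun z => all (fun x => (x \in G) || ((z - x) \in G)) (iota 1 z.-1)) G].
  (* z = x + y with x,y >= 1  <->  x in [1, z-1], y = z - x *)

Definition genus (G : seq nat) : nat := size G.

(* ell G i = l_i, the i-th smallest element (1-indexed). *)
Definition ell (G : seq nat) (i : nat) : nat := nth 0 (sort leq G) i.-1.

Definition is_multiplicity (G : seq nat) (m : nat) : Prop :=
  [/\ 0 < m, m \notin G & forall s, 0 < s < m -> s \in G].

(* conductor: min { s >= 1 | s + t \notin G for all t >= 0 } = (max G) + 1
   (equal to 1 when G is empty). *)
Definition conductor (G : seq nat) : nat := (\max_(x <- G) x).+1.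
Definition frobenius (G : seq nat) : nat := (conductor G).-1.

(* depth q = ceil (c / m) *)
Definition depth (G : seq nat) (m : nat) : nat := (conductor G + m - 1) %/ m.

Definition cpart (G : seq nat) (m i : nat) : seq nat :=
  [seq x <- G | (i * m + 1 <= x) && (x <= i.+1 * m - 1)].

Definition pseudo_symmetric (G : seq nat) : Prop :=
  frobenius G = 2 * genus G - 2.

Definition pure_sparse (kappa : nat) (G : seq nat) : Prop :=
  (forall i, 1 <= i < genus G -> ell G i.+1 - ell G i <= kappa) /\
  (exists2 i, 1 <= i < genus G & ell G i.+1 - ell G i = kappa).

Definition alpha (kappa : nat) (G : seq nat) : nat :=
  \max_(1 <= i < genus G | ell G i.+1 - ell G i == kappa) i.

From mathcomp Require Import all_boot zify.

(* Write F = 2g - 2 for the Frobenius number. Closure at F gives x or F - x in G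
   for 0 < x < F, and since #G = g a pseudo-symmetric gapset can contain both only
   for x = F/2. As m is not a gap, F - m is one, so the penultimate gap a is at least
   F - m; if it were larger, F - a < m would be a gap paired with a. Hence a = F - m
   and m = F - a <= 2n + 1. Conversely, reflecting a run of non-gaps below F through F
   gives a run of gaps, which cannot contain a multiple of m, so every step between
   consecutive gaps is at most m; pure sparseness provides a step 2n + 1, so
   m = 2n + 1. Then F = 3m - 1, a = 2m - 1, and the remaining claims are counting. *)

Set Implicit Arguments.
Unset Strict Implicit.
Unset Printing Implicit Defensive.

Lemma count_partition3 (T : eqType) (a b c : pred T) (s : seq T) :
  (forall x, x \in s -> a x + b x + c x = 1) ->
  count a s + count b s + count c s = size s.
Proof.
elim: s => //= x s IHs abc1.
have := abc1 x (mem_head x s).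
have := IHs (fun y ys => abc1 y (predU1r _ _ ys)); lia.
Qed.

Section Gapset.
Variable G : seq nat.
Hypothesis gsG : is_gapset G.

Lemma gapset_uniq : uniq G.
Proof. by case/and3P: gsG. Qed.

Lemma gapset_gt0 x : x \in G -> 0 < x.
Proof. by case/and3P: gsG => _ /allP gt0G _; apply: gt0G. Qed.

Lemma gapset_split z x : z \in G -> 0 < x < z -> (x \in G) || (z - x \in G).
Proof.
case/and3P: gsG => _ _ /allP closedG zG x_lt.
by apply: (allP (closedG z zG)); rewrite mem_iota; lia.
Qed.

Lemma gapset_mul_notin m k : 0 < m -> m \notin G -> 0 < k -> k * m \notin G.
Proof.
move=> m_gt0 mG; elim: k => [|[|k] IHk] // _; first by rewrite mul1n.
apply/negP=> kmG; have /orP[] : (m \in G) || (k.+2 * m - m \in G).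
- by apply: gapset_split kmG _; nia.
- by rewrite (negbTE mG).
- by rewrite mulSn addKn (negbTE (IHk _)).
Qed.

Lemma gapset_size_sym_pair k x :
  2 * k + 2 \in G -> 0 < x <= k -> x \in G -> 2 * k + 2 - x \in G -> k.+2 < size G.
Proof.
set F := 2 * k + 2 => FG x_le xG FxG.
(* Picking one gap from each pair {y, F - y}, 0 < y <= k, gives k gaps besides
   k + 1, F and F - x. *)
pose c y := if y \in G then y else F - y.
have cG y : 0 < y <= k -> c y \in G.
  move=> y_le; rewrite /c; case: ifP => // /negbT yG.
  by have := @gapset_split F y FG; rewrite (negbTE yG); apply; lia.
have c_range y : 0 < y <= k -> (c y <= k) || (k.+2 <= c y <= 2 * k + 1).
  by rewrite /c; case: ifP; lia.
have c_inj : {in iota 1 k &, injective c}.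
  move=> y1 y2; rewrite !mem_iota /c; do 2 case: ifP; lia.
have midG : k.+1 \in G.
  by have := @gapset_split F k.+1 FG; rewrite (_ : F - k.+1 = k.+1) ?orbb; [apply; lia | lia].
have FxNc : F - x \notin map c (iota 1 k).
  apply/mapP=> -[y]; rewrite mem_iota => y_le.
  have := c_range y y_le; rewrite /c; case: ifP; first lia.
  by move=> /negbT yG _ Fx_eq; move: yG; rewrite (_ : y = x) ?xG //; lia.
have : size [:: F - x, k.+1, F & map c (iota 1 k)] <= size G.
  apply: uniq_leq_size; last first.
    move=> y; rewrite !inE => /or4P[/eqP->|/eqP->|/eqP->|/mapP[z]] //.
    by rewrite mem_iota => z_le ->; apply: cG; lia.
  have cN y0 : y0 \in map c (iota 1 k) -> (y0 <= k) || (k.+2 <= y0 <= 2 * k + 1).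
    by case/mapP=> y; rewrite mem_iota => /c_range + ->.
  rewrite /= map_inj_in_uniq ?iota_uniq // !inE (negbTE FxNc) !andbT orbF.
  apply/and3P; split; apply/negP.
  - by case/orP=> /eqP; lia.
  - by case/orP=> [/eqP|/cN]; lia.
  - by move/cN; lia.
by rewrite /= size_map size_iota.
Qed.

Lemma gapset_hole_le m F a b :
  0 < m -> m \notin G -> F \in G -> a < b <= F ->
  (forall y, a < y < b -> y \notin G) -> b - a <= m.
Proof.
move=> m_gt0 mG FG ab_le holeG; rewrite leqNgt; apply/negP=> wide.
(* t is the least multiple of m above F - b; its reflection F - t lies in the hole. *)
pose t := ((F - b) %/ m).+1 * m.
have t_gt : F - b < t by apply: ltn_ceil.
have t_le : t <= F - b + m by rewrite /t mulSn addnC leq_add2r leq_divM.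
have tNG : t \notin G by apply: gapset_mul_notin.
clearbody t; have : (t \in G) || (F - t \in G) by apply: gapset_split; lia.
by rewrite (negbTE tNG) (negbTE (holeG _ _)) //; lia.
Qed.

End Gapset.

Lemma multiplicity_le_size G m : uniq G -> is_multiplicity G m -> m <= (size G).+1.
Proof.
move=> uG [m_gt0 _ ltmG].
have : size (iota 1 m.-1) <= size G.
  by apply: uniq_leq_size (iota_uniq 1 m.-1) _ => y; rewrite mem_iota => y_lt; apply: ltmG; lia.
by rewrite size_iota; lia.
Qed.

Section SortedEnumeration.
Variable G : seq nat.
Hypothesis uG : uniq G.

Lemma sort_ltn_sorted : sorted ltn (sort leq G).
Proof. by rewrite ltn_sorted_uniq_leq sort_uniq uG sort_sorted //; exact: leq_total. Qed.

Lemma ell_mem i : 0 < i <= size G -> ell G i \in G.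
Proof.
move=> i_le; have : i.-1 < size (sort leq G) by rewrite size_sort; lia.
by move/(mem_nth 0); rewrite mem_sort.
Qed.

Lemma ell_leE i j :
  0 < i <= size G -> 0 < j <= size G -> (ell G i <= ell G j) = (i <= j).
Proof.
move=> i_le j_le; have nth_mono := leq_mono_in (sorted_ltn_nth ltn_trans 0 sort_ltn_sorted).
by rewrite /ell nth_mono ?inE ?size_sort; lia.
Qed.

Lemma ell_ltE i j :
  0 < i <= size G -> 0 < j <= size G -> (ell G i < ell G j) = (i < j).
Proof. by move=> i_le j_le; rewrite !ltnNge ell_leE. Qed.

Lemma ell_surj y : y \in G -> exists2 i, 0 < i <= size G & y = ell G i.
Proof.
rewrite -(mem_sort leq) => yG; exists (index y (sort leq G)).+1; last by rewrite /ell nth_index.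
by rewrite -(size_sort leq) index_mem yG.
Qed.

Lemma ell_max y : y \in G -> y <= ell G (size G).
Proof. by case/ell_surj=> i i_le ->; rewrite ell_leE; lia. Qed.

Lemma ell_max_pred y : y \in G -> y != ell G (size G) -> y <= ell G (size G).-1.
Proof.
case/ell_surj=> i i_le ->; have [i_lt _ | i_ge] := ltnP i (size G).
  by rewrite ell_leE; lia.
by rewrite (_ : i = size G) ?eqxx //; lia.
Qed.

Lemma ell_gap i y : 0 < i < size G -> ell G i < y < ell G i.+1 -> y \notin G.
Proof.
move=> i_lt y_btw; apply/negP=> /ell_surj[j j_le y_eq].
by move: y_btw; rewrite y_eq !ell_ltE; lia.
Qed.

Lemma max_ell : 0 < size G -> \max_(x <- G) x = ell G (size G).
Proof.
move=> G_gt0; apply/eqP; rewrite eqn_leq; apply/andP; split.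
  by apply/bigmax_leqP_seq=> y yG _; apply: ell_max.
by apply: (leq_bigmax_seq (ell G (size G))) => //; apply: ell_mem; lia.
Qed.

End SortedEnumeration.

Definition in_block (m i x : nat) : bool := (i * m + 1 <= x) && (x <= i.+1 * m - 1).

Lemma cpartE G m i : cpart G m i = filter (in_block m i) G.
Proof. by []. Qed.

Section PseudoSymmetricSparse.
Variables (n m : nat) (G : seq nat).
Hypotheses (n_gt0 : 0 < n) (gsG : is_gapset G) (sizeG : size G = 3 * n + 2).
Hypotheses (psG : pseudo_symmetric G) (spG : pure_sparse (2 * n + 1) G).
Hypothesis multG : is_multiplicity G m.

Let uG : uniq G := gapset_uniq gsG.

Lemma ell_last : ell G (size G) = 6 * n + 2.
Proof.
by move: psG; rewrite /pseudo_symmetric /frobenius /conductor /= (max_ell uG) /genus; lia.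
Qed.

Lemma frobenius_mem : 6 * n + 2 \in G.
Proof. by rewrite -ell_last ell_mem //; lia. Qed.

Lemma last_gap_le : ell G (size G) - ell G (size G).-1 <= 2 * n + 1.
Proof. by case: spG => + _; move/(_ (size G).-1); rewrite prednK /genus; [apply | ..]; lia. Qed.

Lemma ell_penult : ell G (size G).-1 = 6 * n + 2 - m.
Proof.
case: multG => m_gt0 mG ltmG; set a := ell G _.
have m_lt : m < 6 * n + 2 by have := multiplicity_le_size uG multG; rewrite sizeG; lia.
have aG : a \in G by apply: ell_mem; lia.
have a_lt : a < 6 * n + 2 by rewrite -ell_last ell_ltE //; lia.
have FmG : 6 * n + 2 - m \in G.
  by have := @gapset_split G gsG _ m frobenius_mem; rewrite (negbTE mG); apply; lia.
have a_ge : 6 * n + 2 - m <= a by apply: ell_max_pred; rewrite // ell_last; lia.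
apply/eqP; rewrite eqn_leq a_ge andbT leqNgt; apply/negP=> a_gt.
have Fa_le := last_gap_le; rewrite ell_last -/a in Fa_le.
have : (3 * n).+2 < size G.
  have F_eq : 2 * (3 * n) + 2 = 6 * n + 2 by lia.
  apply: (gapset_size_sym_pair gsG (x := 6 * n + 2 - a)); rewrite ?F_eq.
  - exact: frobenius_mem.
  - lia.
  - apply: ltmG; lia.
  - by rewrite (_ : 6 * n + 2 - (6 * n + 2 - a) = a) //; lia.
by rewrite sizeG; lia.
Qed.

Lemma mult_eq : m = 2 * n + 1.
Proof.
case: multG => m_gt0 mG _; apply/eqP; rewrite eqn_leq; apply/andP; split.
  by have := last_gap_le; rewrite ell_last ell_penult; lia.
case: spG => _ [i i_lt <-]; rewrite /genus in i_lt.
apply: (gapset_hole_le gsG m_gt0 mG frobenius_mem); last by move=> y; apply: ell_gap.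
by rewrite -ell_last ell_ltE ?ell_leE //; lia.
Qed.

Lemma ell_last_mult : ell G (size G) = 3 * m - 1.
Proof. by rewrite ell_last mult_eq; lia. Qed.

Lemma ell_penult_mult : ell G (size G).-1 = 2 * m - 1.
Proof. by rewrite ell_penult mult_eq; lia. Qed.

Lemma mem_gap_cases x : x \in G -> 0 < x < m \/ m < x < 2 * m \/ x = 3 * m - 1.
Proof.
case: multG => m_gt0 mG _ xG.
have x_gt0 := gapset_gt0 gsG xG.
have x_neq : x != m by apply: contraNneq mG => <-.
have [->|x_ne] := eqVneq x (ell G (size G)); first by rewrite ell_last_mult; lia.
by have := ell_max_pred uG xG x_ne; rewrite ell_penult_mult; lia.
Qed.

Lemma in_block_count x :
  x \in G -> in_block m 0 x + in_block m 1 x + in_block m 2 x = 1.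
Proof. by move=> /mem_gap_cases; have := mult_eq; rewrite /in_block; lia. Qed.

Lemma mem_cpart x :
  (x \in G) = [|| x \in cpart G m 0, x \in cpart G m 1 | x \in cpart G m 2].
Proof.
rewrite !cpartE !mem_filter; case: (boolP (x \in G)) => xG; rewrite ?andbT ?andbF //.
by have := in_block_count xG; lia.
Qed.

Lemma cpart2_eq : cpart G m 2 = [:: ell G (size G)].
Proof.
rewrite cpartE -(filter_pred1_uniq uG (ell_mem uG _)); last by rewrite sizeG; lia.
apply: eq_in_filter => x xG; rewrite /in_block /= ell_last_mult.
by have := mem_gap_cases xG; have := mult_eq; lia.
Qed.

Lemma size_cpart0 : size (cpart G m 0) = m - 1.
Proof.
case: multG => m_gt0 _ ltmG.
rewrite -(size_iota 1 (m - 1)); apply/perm_size/uniq_perm; rewrite ?filter_uniq ?iota_uniq //.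
move=> x; rewrite mem_filter mem_iota /in_block.
by case: (boolP (0 < x < m)) => x_lt; [rewrite ltmG | ]; lia.
Qed.

Lemma size_cpart1 : size (cpart G m 1) = n + 1.
Proof.
have := count_partition3 in_block_count.
by rewrite -!size_filter -!cpartE size_cpart0 cpart2_eq sizeG /=; have := mult_eq; lia.
Qed.

Lemma depth_eq : depth G m = 3.
Proof.
case: multG => m_gt0 _ _.
rewrite /depth /conductor (max_ell uG) ?ell_last_mult; last by rewrite sizeG addn2.
rewrite (_ : (3 * m - 1).+1 + m - 1 = 3 * m + (m - 1)); last by have := mult_eq; lia.
by rewrite divnMDl // divn_small ?addn0 //; lia.
Qed.

Lemma alpha_eq : alpha (2 * n + 1) G = size G - 1.
Proof.
rewrite /alpha /genus; apply/eqP; rewrite eqn_leq; apply/andP; split.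
  by apply/bigmax_leqP_seq=> i; rewrite mem_index_iota; lia.
have size_gt1 : 1 < size G by rewrite sizeG; lia.
apply: (leq_bigmax_seq (size G - 1)); first by rewrite mem_index_iota; lia.
by rewrite subn1 prednK 1?ltnW // ell_last_mult ell_penult_mult; have := mult_eq; lia.
Qed.

End PseudoSymmetricSparse.

Theorem mainTheorem13 (n : nat) (G : seq nat) (m : nat) :
  0 < n ->
  is_gapset G ->
  genus G = 3 * n + 2 ->
  pseudo_symmetric G ->
  pure_sparse (2 * n + 1) G ->
  is_multiplicity G m ->
  depth G m = 3 /\
  (forall x, (x \in G) =
     [|| x \in cpart G m 0, x \in cpart G m 1 | x \in cpart G m 2]) /\
  cpart G m 2 = [:: ell G (genus G)] /\
  size (cpart G m 1) = n + 1 /\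
  ell G (genus G).-1 = 2 * m - 1 /\
  ell G (genus G) = 3 * m - 1 /\
  alpha (2 * n + 1) G = genus G - 1.
Proof.
move=> n_gt0 gsG sizeG psG spG multG.
split; first exact: (depth_eq (n := n)).
split; first exact: (mem_cpart (n := n)).
split; first exact: (cpart2_eq (n := n)).
split; first exact: (size_cpart1 (n := n)).
split; first exact: (ell_penult_mult (n := n)).
split; first exact: (ell_last_mult (n := n)).
exact: (alpha_eq (n := n) (m := m)).
Qed.
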